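(* Let $Q$ be a dimer quiver on a torus whose dimer algebra $A$ admits a cyclic contraction $\psi:A\to A'$. Then the homotopy algebra $\Lambda=kQ/\ker\eta$ is prime, i.e. for all $a,b\in\Lambda$, $a\Lambda b=0$ implies $a=0$ or $b=0$.
   Context: $k$ is an algebraically closed field. A dimer quiver on a torus is a finite quiver $Q$ embedded in $T^2$ such that each connected component of $T^2\setminus Q$ is simply connected and bounded by an oriented cycle (a unit cycle). Paths compose right to left. The dimer algebra is $A=kQ/I$, $I=\langle p-q\mid\exists a\in Q_1: ap,aq\text{ unit cycles}\rangle$. A perfect matching is a set of arrows containing exactly one arrow of each unit cycle ($\mathcal P$ = the set of them); it is simple if any two vertices are joined by an oriented path avoiding its arrows. $\eta:kQ\to M_{|Q_0|}(k[x_D\mid D\in\mathcal P])$ is $e_i\mapsto e_{ii}$, $a\mapsto\prod_{a\in D\in\mathcal P}x_D\,e_{\operatorname{h}(a),\operatorname{t}(a)}$. $A$ is cancellative if there are no distinct paths $p,q$ and path $r$ with $rp=rq\neq0$ or $pr=qr\neq0$ in $A$. Contractions: for $Q_1^*\subseteq Q_1$, $Q'$ is obtained by removing each arrow of $Q_1^*$ and identifying its head and tail; $\psi:kQ\to kQ'$ is the $k$-linear map sending vertices to their images, arrows not in $Q_1^*$ to themselves, $\delta\in Q_1^*$ to $e_{\operatorname{t}(\delta)}$, multiplicative on paths. If $Q'$ is a dimer quiver with dimer algebra $A'=kQ'/I'$ and $\psi(I)\subseteq I'$, $\psi$ is a contraction of dimer algebras. With $\mathcal S'$ the simple matchings of $Q'$,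 $B'=k[x_D\mid D\in\mathcal S']$, $\tau':A'\to M_{|Q'_0|}(B')$, $e_i\mapsto e_{ii}$, $a\mapsto\prod_{a\in D\in\mathcal S'}x_D\,e_{\operatorname{h}(a),\operatorname{t}(a)}$, and $\bar\tau'(p)$ the nonzero entry of $\tau'(p)$: $\psi$ is a cyclic contraction if $A'$ is cancellative and $k[\bigcup_{i\in Q_0}\bar\tau'(\psi(e_iAe_i))]=k[\bigcup_{i\in Q'_0}\bar\tau'(e_iA'e_i)]$. *)

From HB Require Import structures.
From mathcomp Require Import all_boot all_order all_algebra all_fingroup.
From mathcomp Require Import mpoly.
Set Implicit Arguments. Unset Strict Implicit. Unset Printing Implicit Defensive.
Import GRing.Theory.
Local Open Scope ring_scope.

Record quiver := Quiver {
  vert : finType; arr : finType; tl : arr -> vert; hd : arr -> vert }.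

(* Combinatorial data of a quiver embedded in a closed oriented surface with
   all faces disks bounded by oriented cycles: [sigp a] (resp. [sigm a]) is the
   arrow following [a] on the boundary of the positively (resp. negatively)
   oriented face containing [a].  The unit cycles are the cycles of the two
   permutations. *)
Record dimer := Dimer { dquiv :> quiver; sigp : {perm arr dquiv}; sigm : {perm arr dquiv} }.

(* rotation around the head of an arrow: next incoming arrow at the same vertex *)
Definition rot (Q : dimer) (a : arr Q) : arr Q := ((sigm Q)^-1)%g (sigp Q a).

Definition undirected (Q : quiver) : rel (vert Q) :=
  [rel v w | [exists a : arr Q, ((tl a == v) && (hd a == w)) || ((hd a == v) && (tl a == w))]].

(* Q is a dimer quiver on a torus: the face data is consistent (consecutive
   arrows of a unit cycle are composable), the neighbourhood of every vertex is
   a disk (the corners around each vertex form one cycle), the surface is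
   connected and nonempty, and its Euler characteristic V - E + F is 0. *)
Definition is_torus_dimer (Q : dimer) : bool :=
  [forall a : arr Q, tl (sigp Q a) == hd a] &&
  [forall a : arr Q, tl (sigm Q a) == hd a] &&
  [forall v : vert Q, exists a : arr Q, hd a == v] &&
  [forall a : arr Q, forall b : arr Q, (hd a == hd b) ==> fconnect (@rot Q) a b] &&
  (0 < #|vert Q|)%N &&
  [forall v : vert Q, forall w : vert Q, connect (@undirected Q) v w] &&
  (#|vert Q| + fcard (sigp Q) predT + fcard (sigm Q) predT == #|arr Q|)%N.

(* A (raw) path: its tail vertex and its arrows in traversal order. *)
Definition rpath (Q : quiver) := (vert Q * seq (arr Q))%type.

Fixpoint walk_ok (Q : quiver) (v : vert Q) (s : seq (arr Q)) : bool :=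
  if s is a :: s' then (tl a == v) && walk_ok (hd a) s' else true.
Fixpoint walk_end (Q : quiver) (v : vert Q) (s : seq (arr Q)) : vert Q :=
  if s is a :: s' then walk_end (hd a) s' else v.

Definition pvalid (Q : quiver) (p : rpath Q) : bool := walk_ok p.1 p.2.
Definition ptail (Q : quiver) (p : rpath Q) : vert Q := p.1.
Definition phead (Q : quiver) (p : rpath Q) : vert Q := walk_end p.1 p.2.

(* [r] can be composed after [p] (r p, right-to-left composition) *)
Definition composable (Q : quiver) (r p : rpath Q) : bool :=
  [&& pvalid p, pvalid r & phead p == ptail r].
(* the path r p : first p, then r *)
Definition pcat (Q : quiver) (r p : rpath Q) : rpath Q := (p.1, p.2 ++ r.2).

(* the path p such that a p is the unit cycle of the permutation f through a *)
Definition comp_path (Q : quiver) (f : {perm arr Q}) (a : arr Q) : rpath Q :=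
  (hd a, traject f (f a) (fingraph.order f a).-1).

(* An element of kQ is a finite formal k-linear combination of paths; invalid
   raw paths denote 0.  Two lists denote the same element iff their
   coefficient functions agree. *)
Definition kQ (k : fieldType) (Q : quiver) := seq (k * rpath Q).

Definition coef (k : fieldType) (Q : quiver) (x : kQ k Q) (p : rpath Q) : k :=
  if pvalid p then \sum_(e <- x | e.2 == p) e.1 else 0.

Definition addQ (k : fieldType) (Q : quiver) (x y : kQ k Q) : kQ k Q := x ++ y.
Definition oppQ (k : fieldType) (Q : quiver) (x : kQ k Q) : kQ k Q :=
  [seq (- e.1, e.2) | e <- x].
(* product x y (first y, then x) *)
Definition mulQ (k : fieldType) (Q : quiver) (x y : kQ k Q) : kQ k Q :=
  [seq (a.1 * b.1, pcat a.2 b.2) | a <- x, b <- [seq b <- y | composable a.2 b.2]].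
Definition pel (k : fieldType) (Q : quiver) (p : rpath Q) : kQ k Q := [:: (1, p)].

(* the generator u (p - q) w of the ideal I, for the arrow a *)
Definition gen_term (k : fieldType) (Q : dimer) (c : k) (u : rpath Q) (a : arr Q)
    (w : rpath Q) : kQ k Q :=
  let p := comp_path (sigp Q) a in let q := comp_path (sigm Q) a in
  if composable p w && composable u p then
    [:: (c, pcat u (pcat p w)); (- c, pcat u (pcat q w))]
  else [::].

(* x lies in the two-sided ideal I = < p - q | a p, a q unit cycles >, i.e. x is
   a linear combination of elements u (p - q) w with u, w paths *)
Definition inI (k : fieldType) (Q : dimer) (x : kQ k Q) : Prop :=
  exists g : seq (k * rpath Q * arr Q * rpath Q),
    coef x =1 coef (flatten [seq gen_term e.1.1.1 e.1.1.2 e.1.2 e.2 | e <- g]).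

(* equality in the dimer algebra A = kQ / I *)
Definition eqA (k : fieldType) (Q : dimer) (x y : kQ k Q) : Prop :=
  inI (addQ x (oppQ y)).

Definition cancellative (k : fieldType) (Q : dimer) : Prop :=
  ~ (exists p q r : rpath Q, [/\ pvalid p, pvalid q, pvalid r,
        ~ eqA (pel k p) (pel k q) &
        (eqA (mulQ (pel k r) (pel k p)) (mulQ (pel k r) (pel k q)) /\
           ~ inI (mulQ (pel k r) (pel k p))) \/
        (eqA (mulQ (pel k p) (pel k r)) (mulQ (pel k q) (pel k r)) /\
           ~ inI (mulQ (pel k p) (pel k r)))]).

Definition perfect (Q : dimer) (M : {set arr Q}) : bool :=
  [forall a : arr Q, (#|[set b in M | fconnect (sigp Q) a b]| == 1%N) &&
             (#|[set b in M | fconnect (sigm Q) a b]| == 1%N)].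

Definition avoid_rel (Q : quiver) (M : {set arr Q}) : rel (vert Q) :=
  [rel v w | [exists a : arr Q, [&& a \notin M, tl a == v & hd a == w]]].

Definition simple (Q : dimer) (M : {set arr Q}) : bool :=
  perfect M && [forall i : vert Q, forall j : vert Q, connect (avoid_rel M) i j].

(* polynomial ring with one variable x_M per subset M of arrows; the rings
   k[x_D | D perfect] and k[x_D | D simple] are its subrings generated by the
   relevant variables *)
Definition polyQ (k : fieldType) (Q : quiver) := {mpoly k[#|{set arr Q}|]}.
Definition xvar (k : fieldType) (Q : quiver) (M : {set arr Q}) : polyQ k Q :=
  'X_(enum_rank M).

Definition eta_mono (k : fieldType) (Q : dimer) (p : rpath Q) : polyQ k Q :=
  \prod_(a <- p.2) \prod_(M : {set arr Q} | perfect M && (a \in M)) xvar k M.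

Definition eta_path (k : fieldType) (Q : dimer) (p : rpath Q) :
    'M[polyQ k Q]_#|vert Q| :=
  if pvalid p then
    (eta_mono k p) *: delta_mx (enum_rank (phead p)) (enum_rank (ptail p))
  else 0.

Definition eta (k : fieldType) (Q : dimer) (x : kQ k Q) : 'M[polyQ k Q]_#|vert Q| :=
  \sum_(e <- x) (e.1%:MP *: eta_path k e.2).

(* the nonzero entry bar-tau(p) of tau(p), simple matchings *)
Definition taubar (k : fieldType) (Q : dimer) (p : rpath Q) : polyQ k Q :=
  \prod_(a <- p.2) \prod_(M : {set arr Q} | simple M && (a \in M)) xvar k M.

Inductive in_subalg (k : fieldType) (n : nat) (S : {mpoly k[n]} -> Prop) :
    {mpoly k[n]} -> Prop :=
| sa_gen m : S m -> in_subalg S m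
| sa_one : in_subalg S 1
| sa_add m1 m2 : in_subalg S m1 -> in_subalg S m2 -> in_subalg S (m1 + m2)
| sa_mul m1 m2 : in_subalg S m1 -> in_subalg S m2 -> in_subalg S (m1 * m2)
| sa_scale (c : k) m : in_subalg S m -> in_subalg S (c *: m).

(* arrows with [beta a = None] form Q_1^*; the others are identified with the
   arrows of Q' via [beta]; [phi] is the quotient map on vertices identifying
   head and tail of each contracted arrow *)
Definition contr_rel (Q Q' : quiver) (beta : arr Q -> option (arr Q')) : rel (vert Q) :=
  [rel v w | [exists a : arr Q, (beta a == None) &&
      (((tl a == v) && (hd a == w)) || ((hd a == v) && (tl a == w)))]].

Definition is_contraction_map (Q Q' : quiver) (phi : vert Q -> vert Q')
    (beta : arr Q -> option (arr Q')) : Prop :=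
  [/\ (forall v' : vert Q', exists v, phi v = v'),
      (forall b : arr Q', exists a, beta a = Some b),
      (forall a1 a2 b, beta a1 = Some b -> beta a2 = Some b -> a1 = a2),
      (forall a b, beta a = Some b -> tl b = phi (tl a) /\ hd b = phi (hd a)) &
      (forall v w, phi v = phi w <-> connect (contr_rel beta) v w)].

Definition psi_path (Q Q' : quiver) (phi : vert Q -> vert Q')
    (beta : arr Q -> option (arr Q')) (p : rpath Q) : rpath Q' :=
  (phi p.1, pmap beta p.2).

Definition psi (k : fieldType) (Q Q' : quiver) (phi : vert Q -> vert Q')
    (beta : arr Q -> option (arr Q')) (x : kQ k Q) : kQ k Q' :=
  [seq (e.1, psi_path phi beta e.2) | e <- x & pvalid e.2].

Definition cyclic_contraction (k : fieldType) (Q Q' : dimer)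
    (phi : vert Q -> vert Q') (beta : arr Q -> option (arr Q')) : Prop :=
  [/\ is_torus_dimer Q',
      is_contraction_map phi beta,
      (forall x : kQ k Q, inI x -> inI (psi phi beta x)),
      cancellative k Q' &
      (forall m : polyQ k Q',
         in_subalg (fun m' => exists p : rpath Q,
             [/\ pvalid p, phead p = ptail p & m' = taubar k (psi_path phi beta p)]) m
         <->
         in_subalg (fun m' => exists q : rpath Q',
             [/\ pvalid q, phead q = ptail q & m' = taubar k q]) m)].

Definition homotopy_prime (k : fieldType) (Q : dimer) : Prop :=
  forall x y : kQ k Q,
    (forall z : kQ k Q, eta (mulQ (mulQ x z) y) = 0) -> eta x = 0 \/ eta y = 0.

From mathcomp Require Import all_boot all_order all_algebra all_fingroup.
From mathcomp Require Import mpoly.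
Set Implicit Arguments. Unset Strict Implicit. Unset Printing Implicit Defensive.
Import GRing.Theory.
Local Open Scope ring_scope.

(* Primeness of Lambda only needs Q to be strongly connected, which on a
   dimer quiver holds because every arrow a lies on a unit cycle a p, so p
   leads back from h(a) to t(a).
   Since eta is multiplicative, eta(x z y) = eta(x) eta(z) eta(y).  If
   eta(x)_{ih} != 0 and eta(y)_{tj} != 0, take z a path from t to h: eta(z)
   is a nonzero monomial times the matrix unit e_{ht}, so the (i,j) entry of
   eta(x z y) is a product of three nonzero elements of a polynomial ring. *)

Section Walks.
Variable Q : quiver.

Lemma walk_ok_cat (v : vert Q) s1 s2 :
  walk_ok v (s1 ++ s2) = walk_ok v s1 && walk_ok (walk_end v s1) s2.
Proof. by elim: s1 v => [|a s IH] v //=; rewrite IH andbA. Qed.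

Lemma walk_end_cat (v : vert Q) s1 s2 :
  walk_end v (s1 ++ s2) = walk_end (walk_end v s1) s2.
Proof. by elim: s1 v => [|a s IH] v //=. Qed.

Lemma pcat_valid (r p : rpath Q) :
  composable r p -> pvalid (pcat r p) /\ phead (pcat r p) = phead r.
Proof.
rewrite /composable /pvalid /phead /ptail /pcat /= walk_ok_cat walk_end_cat.
by case/and3P=> vp vr /eqP hp_tr; rewrite vp hp_tr vr.
Qed.

Definition reachable (v w : vert Q) : Prop :=
  exists p : rpath Q, [/\ pvalid p, ptail p = v & phead p = w].

Lemma reachable_refl v : reachable v v.
Proof. by exists (v, [::]). Qed.

Lemma reachable_trans u v w : reachable u v -> reachable v w -> reachable u w.
Proof.
move=> [p [vp <- hp]] [r [vr tr <-]].
have cat_rp : composable r p by rewrite /composable vp vr hp tr eqxx.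
by have [vrp hrp] := pcat_valid cat_rp; exists (pcat r p).
Qed.

Lemma reachable_arr a : reachable (tl a) (hd a).
Proof. by exists (tl a, [:: a]); rewrite /pvalid /= eqxx. Qed.

Section CyclicSuccessor.
Variable f : {perm arr Q}.
Hypothesis tl_f : forall a, tl (f a) = hd a.

Lemma reachable_iter n a : reachable (hd a) (hd (iter n f a)).
Proof.
elim: n => [|n IH]; first exact: reachable_refl.
by apply: reachable_trans IH _; rewrite /= -tl_f; apply: reachable_arr.
Qed.

Lemma reachable_hd_tl a : reachable (hd a) (tl a).
Proof.
have f_last : f (iter (fingraph.order f a).-1 f a) = a.
  by rewrite -iterS orderSpred iter_order //; apply: perm_inj.
by rewrite -[in tl a]f_last tl_f; apply: reachable_iter.
Qed.

Lemma reachable_of_connect_undirected v w :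
  connect (@undirected Q) v w -> reachable v w.
Proof.
case/connectP=> s; elim: s v => [|u s IH] v /=; first by move=> _ ->; apply: reachable_refl.
case/andP=> /existsP [a /orP [] /andP [/eqP <- /eqP <-]] su wE.
- exact: reachable_trans (reachable_arr a) (IH _ su wE).
- exact: reachable_trans (reachable_hd_tl a) (IH _ su wE).
Qed.

End CyclicSuccessor.
End Walks.

Lemma mulmx_delta_mxE (R : pzRingType) n (X Y : 'M[R]_n) (i h t j : 'I_n) :
  (X *m delta_mx h t *m Y) i j = X i h * Y t j.
Proof.
rewrite -(mul_delta_mx (0 : 'I_1) h t) mulmxA -colE -mulmxA -rowE.
by rewrite !mxE big_ord1 !mxE.
Qed.

Lemma mpolyX_neq0 (R : nzRingType) n (i : 'I_n) : ('X_i : {mpoly R[n]}) != 0.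
Proof.
apply/eqP=> X0; have := mcoeffXU R i i.
by rewrite X0 mcoeff0 eqxx => /eqP; rewrite eq_sym oner_eq0.
Qed.

Section Eta.
Variables (k : fieldType) (Q : dimer).

Lemma eta_mono_neq0 (p : rpath Q) : eta_mono k p != 0.
Proof.
rewrite prodf_seq_neq0; apply/allP=> a _; apply/prodf_neq0=> M _.
exact: mpolyX_neq0.
Qed.

Lemma eta_path_mul (r p : rpath Q) :
  eta_path k r *m eta_path k p =
  if composable r p then eta_path k (pcat r p) else 0.
Proof.
rewrite /eta_path /composable.
case vp: (pvalid p); last by rewrite mulmx0.
case vr: (pvalid r); last by rewrite mul0mx.
rewrite -scalemxAl -scalemxAr mul_delta_mx_cond (inj_eq enum_rank_inj) eq_sym /=.
case: eqP => [hp_tr|_]; last by rewrite mulr0n !scaler0.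
have [-> ->] : pvalid (pcat r p) /\ phead (pcat r p) = phead r.
  by apply: pcat_valid; rewrite /composable vp vr hp_tr eqxx.
by rewrite mulr1n scalerA /eta_mono /pcat big_cat mulrC.
Qed.

Lemma eta_mul (x y : kQ k Q) : eta (mulQ x y) = eta x *m eta y.
Proof.
rewrite /eta /mulQ big_allpairs_dep mulmx_suml; apply: eq_bigr => a _.
rewrite mulmx_sumr big_filter big_mkcond; apply: eq_bigr => b _ /=.
rewrite -scalemxAl -scalemxAr scalerA eta_path_mul mpolyCM.
by case: ifP => _ //; rewrite scaler0.
Qed.

Lemma eta_pel (p : rpath Q) : pvalid p ->
  eta (pel k p) = eta_mono k p *: delta_mx (enum_rank (phead p)) (enum_rank (ptail p)).
Proof. by move=> vp; rewrite /eta big_seq1 /eta_path vp mpolyC1 scale1r. Qed.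

Lemma homotopy_prime_of_reachable :
  (forall v w : vert Q, reachable v w) -> homotopy_prime k Q.
Proof.
move=> reach x y xLy0.
have [->|/matrix0Pn [i [h xih]]] := eqVneq (eta x) 0; first by left.
have [->|/matrix0Pn [t [j ytj]]] := eqVneq (eta y) 0; first by right.
have [p [vp tp hp]] := reach (enum_val t) (enum_val h).
suff : eta (mulQ (mulQ x (pel k p)) y) i j != 0 by rewrite xLy0 mxE eqxx.
rewrite !eta_mul eta_pel // tp hp !enum_valK -scalemxAr -scalemxAl.
by rewrite mxE mulmx_delta_mxE !mulf_neq0 ?eta_mono_neq0.
Qed.

End Eta.

Theorem corollary5p12 (k : closedFieldType) (Q : dimer) :
  is_torus_dimer Q ->
  (exists (Q' : dimer) (phi : vert Q -> vert Q') (beta : arr Q -> option (arr Q')),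
      cyclic_contraction k phi beta) ->
  homotopy_prime k Q.
Proof.
move=> /andP [/andP [/andP [/andP [/andP [/andP [/forallP tl_sigp _] _] _] _] /forallP conn] _] _.
apply: homotopy_prime_of_reachable => v w.
apply: (@reachable_of_connect_undirected _ (sigp Q)) => [a|].
  by apply/eqP; apply: tl_sigp.
by move/forallP: (conn v).
Qed.
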